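(* Let $X=\mathcal{P}(\omega)$ equipped with the subset relation, let $\Gamma$ be the group of all automorphisms of $\langle X,\subseteq\rangle$ acting by application, and let $I$ be the ideal of finite subsets of $X$. Then $\Gamma\curvearrowright X, I$ is almost simple but not simple.
   Context: For a group $\Gamma$ acting on $X$ and $a\subseteq X$, $\mathrm{pstab}(a)=\{\gamma\in\Gamma:\gamma\cdot x=x\ \forall x\in a\}$. A dynamical ideal $\Gamma\curvearrowright X, I$ (a $\Gamma$-invariant ideal containing all singletons) is simple if for all $a\subseteq b$ in $I$, the only normal subgroup of $\mathrm{pstab}(a)$ containing $\mathrm{pstab}(b)$ is $\mathrm{pstab}(a)$ itself; it is almost simple if every set in $I$ has a superset $a\in I$ such that for every $b\in I$ with $a\subseteq b$, the only normal subgroup of $\mathrm{pstab}(a)$ containing $\mathrm{pstab}(b)$ is $\mathrm{pstab}(a)$. *)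

From HB Require Import structures.
From mathcomp Require Import all_boot.
From mathcomp Require Import boolp classical_sets cardinality.
Set Implicit Arguments. Unset Strict Implicit. Unset Printing Implicit Defensive.
Local Open Scope classical_set_scope.

Definition pstab (X : Type) (Gamma : set (X -> X)) (a : set X) : set (X -> X) :=
  [set g | Gamma g /\ forall x, a x -> g x = x].

Definition subgroup_of (X : Type) (N K : set (X -> X)) : Prop :=
  [/\ N `<=` K, N id,
      (forall f g, N f -> N g -> N (f \o g)) &
      (forall f, N f -> exists2 h, N h & (h \o f = id /\ f \o h = id))].

Definition normal_subgroup_of (X : Type) (N K : set (X -> X)) : Prop :=
  subgroup_of N K /\
  (forall g gi n, K g -> gi \o g = id -> g \o gi = id -> N n ->
     N (g \o n \o gi)).

Definition only_full_normal_over (X : Type) (Gamma : set (X -> X))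
  (a b : set X) : Prop :=
  forall N, normal_subgroup_of N (pstab Gamma a) ->
    pstab Gamma b `<=` N -> N = pstab Gamma a.

Definition dynamical_ideal (X : Type) (Gamma : set (X -> X))
  (I : set (set X)) : Prop :=
  [/\ (forall a b, I b -> a `<=` b -> I a),
      (forall a b, I a -> I b -> I (a `|` b)),
      (forall x, I [set x]) &
      (forall g a, Gamma g -> I a -> I (g @` a))].

Definition simple_dyn (X : Type) (Gamma : set (X -> X)) (I : set (set X)) :=
  forall a b, I a -> I b -> a `<=` b -> only_full_normal_over Gamma a b.

Definition almost_simple_dyn (X : Type) (Gamma : set (X -> X))
  (I : set (set X)) :=
  forall c, I c -> exists a, [/\ I a, c `<=` a &
    forall b, I b -> a `<=` b -> only_full_normal_over Gamma a b].

Definition Pomega := set nat.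

Definition AutPomega : set (Pomega -> Pomega) :=
  [set f | bijective f /\ forall A B : Pomega, A `<=` B <-> f A `<=` f B].

Definition FinIdeal : set (set Pomega) := [set a | finite_set a].

From mathcomp Require Import all_boot.
From mathcomp Require Import boolp classical_sets cardinality.
Set Implicit Arguments. Unset Strict Implicit. Unset Printing Implicit Defensive.
Local Open Scope classical_set_scope.

(* Every automorphism of (P(omega), ⊆) is induced by a permutation of omega,
   so the pointwise stabilizer of a finite family a of subsets consists of the
   permutations preserving every atom of the Boolean algebra generated by a.

   Not simple: for a = {{0,1}} and b = a ∪ {{0},{1}}, pstab(b) is the kernel of
   the action of pstab(a) on {0,1}, a proper normal subgroup.

   Almost simple: enlarge a finite c to a by adding the singletons of the points
   lying in finite atoms of c. Let b ⊇ a be finite and N ⊴ pstab(a) contain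
   pstab(b). If t ∈ pstab(a) fixes pointwise a set E splitting every infinite
   atom A into two infinite parts, some r ∈ pstab(a) maps each A \ E into a
   single atom of b, so r t r⁻¹ ∈ pstab(b) ⊆ N and t ∈ N. On an infinite atom,
   a permutation s has infinitely many fixed points or an infinite sparse
   sequence d with s(d_i) ≠ d_j; swapping every other d_i with its image gives
   an involution t with both t and t s of the previous kind, and s = t (t s). *)

(** * Automorphisms of (set T, ⊆) and pointwise stabilizers *)

Section SetAutomorphisms.
Variable T : Type.

Definition order_aut : set (set T -> set T) :=
  [set f | bijective f /\ forall A B, A `<=` B <-> f A `<=` f B].

Definition inv_pair (s si : T -> T) := cancel s si /\ cancel si s.

Definition img (s : T -> T) : set T -> set T := fun A => s @` A.

Lemma img_comp s r : img (s \o r) = img s \o img r.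
Proof. by apply: funext => A; rewrite /img /= image_comp. Qed.

Lemma img_can s si : cancel s si -> cancel (img s) (img si).
Proof.
move=> sK A; rewrite /img image_comp; apply/seteqP; split => x /=.
  by case=> y Ay <-; rewrite /= sK.
by move=> Ax; exists x; rewrite //= sK.
Qed.

Lemma img_inv_left s si gi : inv_pair s si -> gi \o img s = id -> gi = img si.
Proof.
case=> sK siK giK; apply: funext => A.
by rewrite -[in LHS](img_can siK A) -[LHS]/((gi \o img s) (img si A)) giK.
Qed.

Lemma img_inv_pair s si : inv_pair s si ->
  img si \o img s = id /\ img s \o img si = id.
Proof. by case=> sK siK; split; apply: funext => A /=; rewrite img_can. Qed.

Lemma order_aut_img s si : inv_pair s si -> order_aut (img s).
Proof.
case=> sK siK; split; first by exists (img si); apply: img_can.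
move=> A B; split; first by move=> AB _ [x Ax <-]; exists x => //; apply: AB.
move=> AB x Ax.
by have [y By /(can_inj sK) <-] := AB (s x) (ex_intro2 _ _ x Ax erefl).
Qed.

Lemma order_aut_id : order_aut id.
Proof. by split; [exists id | ]. Qed.

Lemma order_aut_comp f g : order_aut f -> order_aut g -> order_aut (f \o g).
Proof.
move=> [bf f_mono] [bg g_mono]; split; first exact: bij_comp.
by move=> A B; rewrite g_mono f_mono.
Qed.

Lemma order_aut_inv f fi : order_aut f -> cancel f fi -> cancel fi f ->
  order_aut fi.
Proof.
move=> [_ f_mono] fK fiK; split; first by exists f.
by move=> A B; rewrite (f_mono (fi A)) !fiK.
Qed.

(* Singletons are the atoms of (set T, ⊆), so an order automorphism permutes them. *)
Lemma order_aut_set1 g x : order_aut g -> exists y, g [set x] = [set y].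
Proof.
move=> [[gi gK giK] g_mono].
have g0 : g set0 = set0.
  by rewrite -subset0 -{2}(giK set0); apply: (g_mono _ _).1 => ? [].
have set1N0 (z : T) : [set z] <> set0 by move=> /seteqP[/(_ z erefl)].
have [y gxy] : g [set x] !=set0.
  by apply/set0P/eqP => gx0; apply: (set1N0 x); rewrite -(gK [set x]) gx0 -{1}g0 gK.
have /subset_set1[gy0|gyx] : gi [set y] `<=` [set x].
- by apply: (g_mono _ _).2; rewrite giK => _ ->.
- by exfalso; apply: (set1N0 y); rewrite -(giK [set y]) gy0 g0.
by exists y; rewrite -gyx giK.
Qed.

Lemma set1_inj (a b : T) : [set a] = [set b] -> a = b.
Proof. by move=> ab; have : [set a] a by []; rewrite ab. Qed.

Lemma order_autP g : order_aut g -> exists s si, inv_pair s si /\ g = img s.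
Proof.
move=> ag; have [[gi gK giK] g_mono] := ag.
have agi := order_aut_inv ag gK giK.
have [s gs] := choice (fun x => order_aut_set1 x ag).
have [si gis] := choice (fun x => order_aut_set1 x agi).
have sK : cancel s si by move=> x; apply/set1_inj; rewrite -gis -gs gK.
have siK : cancel si s by move=> x; apply/set1_inj; rewrite -gs -gis giK.
exists s, si; split => //; apply: funext => A; apply/seteqP; split => y.
  move=> gAy; exists (si y); last exact: siK.
  by apply: (g_mono [set si y] A).2 => [|//]; rewrite gs siK => _ ->.
by case=> x Ax <-; apply: (g_mono [set x] A).1 => [_ -> //|]; rewrite gs.
Qed.

Definition same_atom (fam : set (set T)) x y := forall S, fam S -> (S x <-> S y).

Definition atom fam x := [set y | same_atom fam x y].

Lemma same_atom_sym fam x y : same_atom fam x y -> same_atom fam y x.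
Proof. by move=> xy S fS; apply: iff_sym (xy S fS). Qed.

Lemma same_atom_trans fam x y z :
  same_atom fam x y -> same_atom fam y z -> same_atom fam x z.
Proof. by move=> xy yz S fS; apply: iff_trans (xy S fS) (yz S fS). Qed.

Lemma atom_eq fam x y : same_atom fam x y -> atom fam x = atom fam y.
Proof.
move=> xy; apply/seteqP; split => z /=; last exact: same_atom_trans.
exact: same_atom_trans (same_atom_sym xy).
Qed.

Lemma same_atom_inv fam s si : inv_pair s si ->
  (forall x, same_atom fam x (s x)) -> forall x, same_atom fam x (si x).
Proof. by move=> [_ siK] s_atom x; apply: same_atom_sym; rewrite -{2}(siK x). Qed.

Lemma pstab_imgP fam s si : inv_pair s si ->
  pstab order_aut fam (img s) <-> forall x, same_atom fam x (s x).
Proof.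
move=> [sK siK]; split.
  move=> [_ fix_fam] x S fS; have sS := fix_fam S fS; split => [Sx|Ssx].
    by rewrite -sS; exists x.
  by have [y Sy /(can_inj sK) <-] : img s S (s x) by rewrite sS.
move=> s_atom; split; first exact: order_aut_img (conj sK siK).
move=> S fS; apply/seteqP; split => y; first by case=> x Sx <-; apply/(s_atom x S fS).
by move=> Sy; exists (si y); [apply/(s_atom _ S fS); rewrite siK | exact: siK].
Qed.

End SetAutomorphisms.

Lemma comp_idK (U : Type) (f g : U -> U) : f \o g = id -> cancel g f.
Proof. by move=> fg x; rewrite -[RHS]/(id x) -fg. Qed.

Section PointwiseStabilizers.
Variables (X : Type) (Gamma : set (X -> X)).
Hypothesis Gamma_id : Gamma id.
Hypothesis Gamma_comp : forall f g, Gamma f -> Gamma g -> Gamma (f \o g).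
Hypothesis Gamma_inv :
  forall f, Gamma f -> exists2 h, Gamma h & h \o f = id /\ f \o h = id.

Lemma pstab_subgroup a b : a `<=` b -> subgroup_of (pstab Gamma b) (pstab Gamma a).
Proof.
move=> ab; split.
- by move=> f [Gf f_fix]; split => // x /ab; apply: f_fix.
- by split.
- move=> f g [Gf f_fix] [Gg g_fix].
  by split=> [|x bx /=]; rewrite ?g_fix ?f_fix //; apply: Gamma_comp.
- move=> f [Gf f_fix]; have [h Gh [hf fh]] := Gamma_inv Gf; exists h => //.
  by split=> // x bx; rewrite -[in LHS](f_fix x bx) (comp_idK hf).
Qed.

Lemma pstab_normal a b : a `<=` b ->
  (forall g gi, pstab Gamma a g -> gi \o g = id -> g \o gi = id ->
     forall x, b x -> b (gi x)) ->
  normal_subgroup_of (pstab Gamma b) (pstab Gamma a).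
Proof.
move=> ab b_inv; split; first exact: pstab_subgroup.
move=> g gi n ag gig ggi [Gn n_fix].
have [h Gh [hg gh]] := Gamma_inv ag.1.
have gih : gi = h.
  by apply: funext => x; rewrite -(comp_idK gig (h x)) (comp_idK gh).
split; first by rewrite gih; exact: Gamma_comp (Gamma_comp ag.1 Gn) Gh.
move=> x bx /=; rewrite n_fix; last exact: b_inv ag gig ggi x bx.
exact: comp_idK ggi x.
Qed.

End PointwiseStabilizers.

Lemma finite_dynamical_ideal (X : Type) (Gamma : set (X -> X)) :
  dynamical_ideal Gamma [set a | finite_set a].
Proof.
split.
- by move=> a b fin_b /sub_finite_set; apply.
- by move=> a b fin_a fin_b; rewrite /= finite_setU.
- exact: finite_set1.
- by move=> g a _; apply: finite_image.
Qed.

Lemma AutPomega_id : AutPomega id.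
Proof. exact: order_aut_id. Qed.

Lemma AutPomega_comp f g : AutPomega f -> AutPomega g -> AutPomega (f \o g).
Proof. exact: order_aut_comp. Qed.

Lemma AutPomega_inv f :
  AutPomega f -> exists2 h, AutPomega h & h \o f = id /\ f \o h = id.
Proof.
move=> af; have [[h fK hK] _] := af; exists h; first exact: order_aut_inv af fK hK.
by split; apply: funext => x /=; rewrite ?fK ?hK.
Qed.

(** * Failure of simplicity *)

Definition swap01 (n : nat) : nat :=
  if n == 0%N then 1%N else if n == 1%N then 0%N else n.

Lemma swap01K : cancel swap01 swap01.
Proof. by case=> [|[|n]]. Qed.

Lemma not_simple_Pomega : ~ simple_dyn AutPomega FinIdeal.
Proof.
pose pair01 : set nat := [set 0%N; 1%N].
pose a : set Pomega := [set pair01].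
pose b : set Pomega := [set pair01; [set 0%N]; [set 1%N]].
have ab : a `<=` b by move=> _ ->; left; left.
have b_normal : normal_subgroup_of (pstab AutPomega b) (pstab AutPomega a).
  apply: (pstab_normal AutPomega_id AutPomega_comp AutPomega_inv ab).
  move=> g gi ag gig _ S bS.
  have gi01 : gi pair01 = pair01 by rewrite -{1}(ag.2 pair01 erefl) comp_idK.
  have [s [si [ssi gs]]] := order_autP ag.1.
  rewrite gs in ag gig; have s_atom := (pstab_imgP a ssi).1 ag.
  have si01 x : pair01 x -> pair01 (si x).
    exact: (same_atom_inv ssi s_atom x (erefl : a pair01)).1.
  have img_set1 x : pair01 x -> b (img si [set x]).
    by move=> /si01[]si_x; rewrite /img image_set1 si_x; [left; right | right].
  rewrite (img_inv_left ssi gig) in gi01 *.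
  case: bS => [[->|->]|->]; first by rewrite gi01; left; left.
    by apply: img_set1; left.
  by apply: img_set1; right.
move=> /(_ a b (finite_set1 _) (finite_set3 _ _ _) ab _ b_normal (@subset_refl _ _)) ba.
have swap_a : pstab AutPomega a (img swap01).
  apply/(pstab_imgP _ (conj swap01K swap01K)) => x _ ->.
  by case: x => [|[|x]]; rewrite /pair01 /swap01 /=; intuition.
rewrite -ba in swap_a.
have b0 : b [set 0%N] by left; right.
by have := ((pstab_imgP _ (conj swap01K swap01K)).1 swap_a 0%N _ b0).1 erefl.
Qed.

(** * Infinite sets of naturals *)

Definition bij_on (A B : set nat) (f g : nat -> nat) :=
  (forall x, A x -> B (f x) /\ g (f x) = x) /\
  (forall y, B y -> A (g y) /\ f (g y) = y).

Definition splits (A E : set nat) :=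
  infinite_set (A `&` E) /\ infinite_set (A `\` E).

Lemma infinite_range (h : nat -> nat) : injective h -> infinite_set (range h).
Proof.
move=> h_inj; have : (range h #= [set: nat])%card.
  by apply: inj_card_eq => x y _ _; apply: h_inj.
by move/eq_finite_set => ->; exact: infinite_nat.
Qed.

Lemma infinite_bij_on A B : infinite_set A -> infinite_set B ->
  exists f g, bij_on A B f g.
Proof.
move=> infA infB.
have /card_set_bijP[f [fAB f_inj f_surj]] : (A #= B)%card.
  exact: card_eq_trans (eq_card_nat (countableP A) infA)
                       (card_esym (eq_card_nat (countableP B) infB)).
have f_onto y : exists x, B y -> A x /\ f x = y.
  have [By|nBy] := pselect (B y); last by exists 0%N.
  by have [x Ax <-] := f_surj y By; exists x.
have [g gB] := choice f_onto.
exists f, g; split=> // x Ax; split; first exact: fAB.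
by have [gA /f_inj] := gB _ (fAB x Ax); apply; rewrite ?inE.
Qed.

Lemma infinite_split A : infinite_set A -> exists2 E, E `<=` A & splits A E.
Proof.
move=> infA; have [f [g [fA _]]] := infinite_bij_on infinite_nat infA.
have f_inj : injective f by move=> x y e; rewrite -(fA x I).2 e (fA y I).2.
have even_inj : injective (fun n => f n.*2) by move=> m n /f_inj/double_inj.
have odd_inj : injective (fun n => f n.*2.+1) by move=> m n /f_inj[]/double_inj.
exists (range (fun n => f n.*2)) => [_ [n _ <-]|]; first exact: (fA _ I).1.
split.
  apply: (sub_infinite_set _ (infinite_range even_inj)) => _ [n _ <-].
  by split; [exact: (fA _ I).1 | exists n].
apply: (sub_infinite_set _ (infinite_range odd_inj)) => _ [n _ <-].
split; first exact: (fA _ I).1.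
by case=> m _ /f_inj/(congr1 odd); rewrite /= !odd_double.
Qed.

(* Match A `\` E with one half of B and A `&` E with the rest of A. *)
Lemma bij_on_into A E B : splits A E -> B `<=` A -> infinite_set B ->
  exists r ri, bij_on A A r ri /\ forall x, A x -> ~ E x -> B (r x).
Proof.
move=> [infAE infAnE] BA infB.
have [B1 B1B [infBB1 infBnB1]] := infinite_split infB.
have infB1 : infinite_set B1 by apply: (sub_infinite_set _ infBB1) => x [].
have [f1 [g1 [f1B g1B]]] := infinite_bij_on infAnE infB1.
have infAnB1 : infinite_set (A `\` B1).
  by apply: (sub_infinite_set _ infBnB1) => x [Bx nB1x]; split => //; exact: BA.
have [f2 [g2 [f2B g2B]]] := infinite_bij_on infAE infAnB1.
exists (fun x => if `[< E x >] then f2 x else f1 x).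
exists (fun y => if `[< B1 y >] then g1 y else g2 y).
split; last first.
  by move=> x Ax nEx; rewrite asboolF //; apply/B1B; exact: (f1B x (conj Ax nEx)).1.
split=> [x Ax|y Ay].
  have [Ex|nEx] := pselect (E x).
    by have [[Af nB1] fK] := f2B x (conj Ax Ex); rewrite asboolT // asboolF.
  have [B1f fK] := f1B x (conj Ax nEx); rewrite asboolF // asboolT //.
  by split => //; apply/BA/B1B.
have [B1y|nB1y] := pselect (B1 y).
  by have [[Ag nEg] gK] := g1B y B1y; rewrite asboolT // asboolF.
by have [[Ag Eg] gK] := g2B y (conj Ay nB1y); rewrite asboolF // asboolT.
Qed.

Lemma increasing_seq (M : set nat) (g : nat -> nat) :
  infinite_set M -> (forall x, x <= g x) ->
  exists d, (forall n, M (d n)) /\ forall i j, i < j -> g (d i) < d j.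
Proof.
move=> infM g_ge.
have next k : exists m, M m /\ k < m.
  apply: contrapT => no_next; apply: infM.
  apply: (sub_finite_set _ (finite_II k.+1)) => m Mm /=; rewrite ltnS.
  by rewrite leqNgt; apply/negP => km; apply: no_next; exists m.
have [nx nxP] := choice next.
pose d n := iter n (nx \o g) (nx 0).
exists d; split; first by case=> [|n]; apply: (nxP _).1.
move=> i j; elim: j => // j IHj; rewrite ltnS leq_eqVlt => /orP[/eqP ->|ij].
  exact: (nxP _).2.
exact: leq_ltn_trans (ltnW (IHj ij)) (leq_ltn_trans (g_ge _) (nxP _).2).
Qed.

Lemma sparse_moved_seq (A : set nat) (s si : nat -> nat) : inv_pair s si ->
  infinite_set (A `&` [set x | s x <> x]) ->
  exists d : nat -> nat,
    [/\ injective d, forall n, A (d n) & forall i j, s (d i) <> d j].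
Proof.
move=> [sK siK] infM.
have [d [dM d_incr]] :=
  @increasing_seq _ (fun x => maxn x (maxn (s x) (si x))) infM (fun x => leq_maxl _ _).
have d_gt i j : i < j -> [/\ d i < d j, s (d i) < d j & si (d i) < d j].
  move/d_incr; rewrite !gtn_max => /and3P[] //.
exists d; split=> [i j dij|n|i j sdij].
- have [ij|ji|//] := ltngtP i j.
    by have [] := d_gt _ _ ij; rewrite dij ltnn.
  by have [] := d_gt _ _ ji; rewrite dij ltnn.
- by case: (dM n).
case: (ltngtP i j) => [ij|ji|ij].
- by have [_] := d_gt _ _ ij; rewrite sdij ltnn.
- by have [_ _] := d_gt _ _ ji; rewrite -sdij sK ltnn.
- by case: (dM i) => _ /=; rewrite sdij ij.
Qed.

(* Witnesses that [s = t \o (t \o s)] on [A] with both factors fixing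
   pointwise a set that splits [A]. *)
Definition split_factorization (A : set nat) (s t : nat -> nat) (E1 E2 : set nat) :=
  [/\ bij_on A A t t, forall x, E1 x -> t x = x, forall x, E2 x -> t (s x) = x,
      splits A E1 & splits A E2].

(* [t] swaps [D] and [s @` D] along [s], where [D] is every other term of [d]. *)
Lemma split_factorization_sparse (A : set nat) s si (d : nat -> nat) :
  inv_pair s si -> (forall x, A x -> A (s x)) -> injective d ->
  (forall n, A (d n)) -> (forall i j, s (d i) <> d j) ->
  exists t E1 E2, split_factorization A s t E1 E2.
Proof.
move=> [sK siK] As d_inj Ad d_sparse.
have even_inj : injective (fun n => d n.*2) by move=> m n /d_inj/double_inj.
have odd_inj : injective (fun n => d n.*2.+1) by move=> m n /d_inj[]/double_inj.
pose D := range (fun n => d n.*2).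
pose O := range (fun n => d n.*2.+1).
have DA : D `<=` A by move=> _ [n _ <-].
have OA : O `<=` A by move=> _ [n _ <-].
have D_sD x : D x -> ~ D (s x) by case=> n _ <- [m _]; apply/nesym/d_sparse.
have O_D x : O x -> ~ D x.
  by case=> n _ <- [m _ /d_inj/(congr1 odd)]; rewrite /= !odd_double.
have O_sD x : O x -> ~ (s @` D) x by case=> n _ <- [_ [m _ <-]]; apply: d_sparse.
pose t x := if `[< D x >] then s x else if `[< (s @` D) x >] then si x else x.
have t_inv x : A x -> A (t x) /\ t (t x) = x.
  rewrite /t; have [Dx|nDx] := pselect (D x).
    have sDsx : (s @` D) (s x) by exists x.
    rewrite (asboolT Dx) (asboolF (D_sD x Dx)) (asboolT sDsx) sK.
    by split; [exact: As|].
  rewrite (asboolF nDx); have [sDx|nsDx] := pselect ((s @` D) x); last first.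
    by rewrite (asboolF nsDx) (asboolF nDx) (asboolF nsDx).
  have [y Dy sy] := sDx; rewrite (asboolT sDx) -sy sK (asboolT Dy).
  by split; [exact: DA|].
exists t, [set x | ~ D x /\ ~ (s @` D) x], D; split.
- by split=> x /t_inv.
- by move=> x [nDx nsDx]; rewrite /t (asboolF nDx) (asboolF nsDx).
- move=> x Dx; have sDsx : (s @` D) (s x) by exists x.
  by rewrite /t (asboolF (D_sD x Dx)) (asboolT sDsx) sK.
- split; last by apply: (sub_infinite_set _ (infinite_range even_inj)) => x Dx;
    split; [exact: DA | case].
  apply: (sub_infinite_set _ (infinite_range odd_inj)) => x Ox.
  by split; [exact: OA | split; [exact: O_D | exact: O_sD]].
- split; first by apply: (sub_infinite_set _ (infinite_range even_inj)) => x Dx;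
    split; [exact: DA|].
  apply: (sub_infinite_set _ (infinite_range odd_inj)) => x Ox.
  by split; [exact: OA | exact: O_D].
Qed.

Lemma split_factorization_exists (A : set nat) s si : inv_pair s si ->
  infinite_set A -> (forall x, A x -> A (s x)) ->
  exists t E1 E2, split_factorization A s t E1 E2.
Proof.
move=> ssi infA As.
have [infF|finF] := pselect (infinite_set (A `&` [set x | s x = x])).
  have [E1 _ splitE1] := infinite_split infA.
  have [E2 E2F [infFE2 infFnE2]] := infinite_split infF.
  exists id, E1, E2; split=> //; first by move=> x /E2F[_ ->].
  split; first by apply: (sub_infinite_set _ infFE2) => x [[]].
  by apply: (sub_infinite_set _ infFnE2) => x [[]].
have [d [d_inj Ad d_sparse]] : exists d : nat -> nat,
    [/\ injective d, forall n, A (d n) & forall i j, s (d i) <> d j].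
  apply: sparse_moved_seq ssi _ => finM; apply: infA.
  have : finite_set ((A `&` [set x | s x = x]) `|` (A `&` [set x | s x <> x])).
    by rewrite finite_setU; split; [exact: contrapT finF | exact: contrapT finM].
  by apply: sub_finite_set => x Ax; have [e|ne] := pselect (s x = x); [left|right].
exact: split_factorization_sparse ssi As d_inj Ad d_sparse.
Qed.

(** * Almost simplicity *)

(* A point's atom is determined by which of the finitely many sets of [fam]
   contain it. *)
Lemma finite_atom_code (T : Type) (fam : set (set T)) : finite_set fam ->
  exists (K : finType) (k : T -> K), forall x y, k x = k y -> same_atom fam x y.
Proof.
move=> [n /card_set_bijP[f [fI f_inj _]]].
exists {ffun 'I_n -> bool}.
exists (fun x => [ffun i : 'I_n => `[< exists2 S, fam S & f S = i /\ S x >]]).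
move=> x y kxy S famS; have lt_fS : f S < n by exact: fI.
have := congr1 (fun F : {ffun 'I_n -> bool} => F (Ordinal lt_fS)) kxy.
rewrite !ffunE /= => kxyS.
have memS z : S z <-> `[< exists2 S', fam S' & f S' = f S /\ S' z >].
  split=> [Sz|/asboolP[S' famS' [fS' S'z]]]; first by apply/asboolP; exists S.
  by rewrite -(f_inj S' S _ _ fS') // inE.
by split=> /memS Sz; apply/memS; [rewrite -kxyS | rewrite kxyS].
Qed.

Lemma finite_of_atomwise_finite (T : Type) (fam : set (set T)) (A : set T) :
  finite_set fam -> (forall y, A y -> finite_set (A `&` atom fam y)) ->
  finite_set A.
Proof.
move=> /finite_atom_code[K [k kP]] finA.
have : finite_set (\bigcup_(v in k @` A) (A `&` [set z | k z = v])).
  apply: bigcup_finite; first exact: finite_finset.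
  move=> _ [y Ay <-]; apply: (sub_finite_set _ (finA y Ay)).
  by move=> z [Az kzy]; split => //; apply: kP.
by apply: sub_finite_set => x Ax; exists (k x); [exists x | split].
Qed.

Lemma atomwise_choice (fam : set (set nat)) (U : Type) (P : set nat -> U -> Prop) :
  (forall x, exists u, P (atom fam x) u) ->
  exists h : set nat -> U, forall x, P (atom fam x) (h (atom fam x)).
Proof.
move=> Pex.
have hex A : exists u, forall x, atom fam x = A -> P A u.
  have [[x <-]|noA] := pselect (exists x, atom fam x = A).
    by have [u Pu] := Pex x; exists u.
  by have [u _] := Pex 0%N; exists u => x xA; exfalso; apply: noA; exists x.
by have [h hP] := choice hex; exists h => x; apply: hP.
Qed.

Definition glue (fam : set (set nat)) (U : Type) (h : set nat -> nat -> U) x :=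
  h (atom fam x) x.

Lemma glueE fam U (h : set nat -> nat -> U) x z :
  same_atom fam x z -> glue fam h z = h (atom fam x) z.
Proof. by move=> xz; rewrite /glue (atom_eq xz). Qed.

Lemma glue_bij_on fam (f g : set nat -> nat -> nat) :
  (forall x, bij_on (atom fam x) (atom fam x) (f (atom fam x)) (g (atom fam x))) ->
  inv_pair (glue fam f) (glue fam g) /\ forall x, same_atom fam x (glue fam f x).
Proof.
move=> fg; have atom_refl z : atom fam z z by [].
have f_atom x : same_atom fam x (glue fam f x).
  exact: ((fg x).1 x (atom_refl x)).1.
have g_atom x : same_atom fam x (glue fam g x).
  exact: ((fg x).2 x (atom_refl x)).1.
split=> //; split=> x.
  by rewrite (glueE _ (f_atom x)); exact: ((fg x).1 x (atom_refl x)).2.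
by rewrite (glueE _ (g_atom x)); exact: ((fg x).2 x (atom_refl x)).2.
Qed.

Lemma glue_splits fam (hE : set nat -> set nat) x :
  splits (atom fam x) (hE (atom fam x)) -> splits (atom fam x) (glue fam hE).
Proof.
have glueI : atom fam x `&` glue fam hE = atom fam x `&` hE (atom fam x).
  apply/seteqP; split=> z [xz Ez]; split=> //.
    by rewrite -(glueE hE xz).
  by rewrite (glueE hE xz).
have glueD : atom fam x `\` glue fam hE = atom fam x `\` hE (atom fam x).
  apply/seteqP; split=> z [xz Ez]; split=> //.
    by rewrite -(glueE hE xz).
  by rewrite (glueE hE xz).
by rewrite /splits glueI glueD.
Qed.

Section AlmostSimple.
Variable c : set (set nat).

Definition in_finite_atom x := finite_set (atom c x).

Definition pin_finite_atoms : set (set nat) :=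
  c `|` [set [set y] | y in in_finite_atom].

Definition respects (s : nat -> nat) :=
  (forall x, same_atom c x (s x)) /\ (forall x, in_finite_atom x -> s x = x).

Lemma pstab_pinP s si : inv_pair s si ->
  pstab AutPomega pin_finite_atoms (img s) <-> respects s.
Proof.
move=> ssi; apply: iff_trans (pstab_imgP _ ssi) _; split=> [s_atom|[s_atom s_fix] x S].
  split=> [x S cS|x fin_x]; first exact: s_atom x S (or_introl cS).
  have pin_x : pin_finite_atoms [set x] by right; exists x.
  exact: (s_atom x [set x] pin_x).1 erefl.
case=> [cS|[y fin_y <-]]; first exact: s_atom.
split=> [->|sxy]; first exact: s_fix.
by apply: (can_inj ssi.1); rewrite sxy s_fix.
Qed.

Lemma respects_inv s si : inv_pair s si -> respects s -> respects si.
Proof.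
move=> ssi [s_atom s_fix]; split; first exact: same_atom_inv ssi s_atom.
by move=> x fin_x; rewrite -{1}(s_fix x fin_x) ssi.1.
Qed.

Lemma respects_comp s r : respects s -> respects r -> respects (s \o r).
Proof.
move=> [s_atom s_fix] [r_atom r_fix]; split=> [x|x fin_x /=].
  exact: same_atom_trans (r_atom x) (s_atom (r x)).
by rewrite r_fix // s_fix.
Qed.

Lemma finite_pin_finite_atoms : finite_set c -> finite_set pin_finite_atoms.
Proof.
move=> fin_c; rewrite /pin_finite_atoms finite_setU; split=> //.
apply: finite_image; apply: (finite_of_atomwise_finite fin_c) => y fin_y.
exact: (sub_finite_set _ fin_y) => z [].
Qed.

Section NormalOverPin.
Variables (b : set (set nat)) (N : set (set nat -> set nat)).
Hypothesis fin_b : finite_set b.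
Hypothesis N_normal : normal_subgroup_of N (pstab AutPomega pin_finite_atoms).
Hypothesis pstab_b_N : pstab AutPomega b `<=` N.

(* Conjugating [t] by a permutation [r] in the stabilizer that squeezes each
   infinite atom minus [E] into a single atom of [b] lands in [pstab b]. *)
Lemma img_in_normal_of_fixed_split t ti E : inv_pair t ti -> respects t ->
  (forall x, E x -> t x = x) ->
  (forall x, ~ in_finite_atom x -> splits (atom c x) E) -> N (img t).
Proof.
move=> tti [t_atom t_fix] t_fixE E_splits.
pose P A (rri : (nat -> nat) * (nat -> nat)) :=
  [/\ bij_on A A rri.1 rri.2, finite_set A -> forall z, rri.1 z = z &
      ~ finite_set A -> exists y, forall z, A z -> ~ E z -> same_atom b y (rri.1 z)].
have rri_ex x : exists rri, P (atom c x) rri.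
  have [fin_x|inf_x] := pselect (in_finite_atom x); first by exists (id, id).
  have [y [_ inf_xy]] : exists y, atom c x y /\ infinite_set (atom c x `&` atom b y).
    apply: contrapT => no_y; apply: inf_x.
    apply: (finite_of_atomwise_finite fin_b) => y xy.
    by apply: contrapT => inf_xy; apply: no_y; exists y.
  have [r [ri [rri into_b]]] :=
    bij_on_into (E_splits x inf_x) (@subIsetl _ _ _) inf_xy.
  by exists (r, ri); split=> // _; exists y => z xz nEz; case: (into_b z xz nEz).
have [h hP] := atomwise_choice rri_ex.
pose r := glue c (fun A => (h A).1); pose ri := glue c (fun A => (h A).2).
have [rri r_atom] : inv_pair r ri /\ forall x, same_atom c x (r x).
  by apply: glue_bij_on => x; case: (hP x).
have r_resp : respects r by split=> // x fin_x; case: (hP x) => _ /(_ fin_x x).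
have ri_pin : pstab AutPomega pin_finite_atoms (img ri).
  by apply/(pstab_pinP (conj rri.2 rri.1)); exact: respects_inv rri r_resp.
pose p := r \o t \o ri.
have pp : inv_pair p (r \o ti \o ri).
  by split=> x; rewrite /p /= ?rri.1 ?tti.1 ?tti.2 ?rri.2 ?rri.1 ?rri.2.
have p_b : pstab AutPomega b (img p).
  apply/(pstab_imgP _ pp) => y; rewrite /p /= -{1}(rri.2 y); set x := ri y.
  have [fin_x|inf_x] := pselect (in_finite_atom x); first by rewrite t_fix.
  have [Ex|nEx] := pselect (E x); first by rewrite t_fixE.
  have nEtx : ~ E (t x).
    by move=> Etx; apply: nEx; rewrite -(can_inj tti.1 (t_fixE _ Etx)).
  have [_ _ /(_ inf_x) [y0 y0P]] := hP x.
  rewrite /r (glueE _ (t_atom x)).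
  by apply: same_atom_trans (same_atom_sym (y0P x _ nEx)) (y0P (t x) (t_atom x) nEtx).
have := N_normal.2 _ _ _ ri_pin (img_inv_pair (conj rri.2 rri.1)).1
  (img_inv_pair (conj rri.2 rri.1)).2 (pstab_b_N p_b).
rewrite -!img_comp; suff -> : ri \o p \o r = t by [].
by apply: funext => x; rewrite /p /= !rri.1.
Qed.

Lemma pstab_pin_sub_normal : pstab AutPomega pin_finite_atoms `<=` N.
Proof.
move=> g g_pin; have [s [si [ssi gs]]] := order_autP g_pin.1.
rewrite gs in g_pin *; have [s_atom s_fix] := (pstab_pinP ssi).1 g_pin.
pose P A (q : (nat -> nat) * set nat * set nat) :=
  [/\ bij_on A A q.1.1 q.1.1, finite_set A -> forall z, q.1.1 z = z &
      ~ finite_set A -> split_factorization A s q.1.1 q.1.2 q.2].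
have q_ex x : exists q, P (atom c x) q.
  have [fin_x|inf_x] := pselect (in_finite_atom x); first by exists (id, set0, set0).
  have As z : atom c x z -> atom c x (s z).
    by move=> xz; exact: same_atom_trans xz (s_atom z).
  have [t [E1 [E2 fact]]] := split_factorization_exists ssi inf_x As.
  by exists (t, E1, E2); split=> //; case: fact.
have [h hP] := atomwise_choice q_ex.
pose t := glue c (fun A => (h A).1.1).
have [tt t_atom] : inv_pair t t /\ forall x, same_atom c x (t x).
  by apply: glue_bij_on => x; case: (hP x).
have t_resp : respects t by split=> // x fin_x; case: (hP x) => _ /(_ fin_x x).
have fact x : ~ in_finite_atom x -> split_factorization (atom c x) s
    (h (atom c x)).1.1 (h (atom c x)).1.2 (h (atom c x)).2.
  by case: (hP x) => _ _; apply.
have Nt : N (img t).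
  apply: (img_in_normal_of_fixed_split tt t_resp (E := glue c (fun A => (h A).1.2))).
    move=> x; have [fin_x|inf_x] := pselect (in_finite_atom x).
      by move=> _; apply: t_resp.2.
    by case: (fact x inf_x) => _ + _ _ _; apply.
  by move=> x inf_x; apply: glue_splits; case: (fact x inf_x).
have Nts : N (img (t \o s)).
  apply: (img_in_normal_of_fixed_split (ti := si \o t) _
    (respects_comp t_resp (conj s_atom s_fix)) (E := glue c (fun A => (h A).2))).
  - by split=> x /=; rewrite ?tt.1 ?ssi.1 ?ssi.2 ?tt.1.
  - move=> x E2x /=; have [fin_x|inf_x] := pselect (in_finite_atom x).
      by rewrite s_fix // t_resp.2.
    rewrite /t (glueE _ (s_atom x)).
    by case: (fact x inf_x) => _ _ + _ _; apply.
  - by move=> x inf_x; apply: glue_splits; case: (fact x inf_x).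
have tts : t \o (t \o s) = s by apply: funext => x /=; rewrite tt.1.
by case: N_normal => [[_ _ N_comp _] _]; rewrite -tts img_comp; apply: N_comp.
Qed.

End NormalOverPin.

End AlmostSimple.

Lemma almost_simple_Pomega : almost_simple_dyn AutPomega FinIdeal.
Proof.
move=> c fin_c; exists (pin_finite_atoms c); split.
- exact: finite_pin_finite_atoms.
- by move=> S cS; left.
move=> b fin_b _ N N_normal b_N; apply/seteqP; split; first by case: N_normal => [[]].
exact: pstab_pin_sub_normal fin_b N_normal b_N.
Qed.

Theorem mainTheorem17 :
  dynamical_ideal AutPomega FinIdeal /\
  almost_simple_dyn AutPomega FinIdeal /\
  ~ simple_dyn AutPomega FinIdeal.
Proof.
split; first exact: finite_dynamical_ideal.
by split; [exact: almost_simple_Pomega | exact: not_simple_Pomega].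
Qed.
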